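(* Let $G$ be a discrete group, $\mathbf k\subseteq{\rm Seq}(\mathbf C)$ a $\sigma$-subring with constants $\mathbf C$, $\alpha\in\mathcal C_c(G,\mathbf k)$, and consider the solutions of $\sigma(s)=\alpha\star s$ in $\mathcal C(G,{\rm Seq}(\mathbf C))$, equipped with the topology of pointwise convergence on $\mathbf Z_{\ge0}\times G$. Then: (a) ${\rm Sol}_c(\alpha,L^c)$ is dense in ${\rm Sol}(\alpha,L)$; (b) ${\rm Sol}_{\rm per}(\alpha,L^{\rm per})$ is dense in ${\rm Sol}(\alpha,L)$ if and only if $G$ is residually finite; (c) if $G$ is not finite, ${\rm Sol}_c(\alpha,L^c)\cap{\rm Sol}_{\rm per}(\alpha,L^{\rm per})=\{0\}$; (d) if $G$ is finite, ${\rm Sol}(\alpha,L)={\rm Sol}_c(\alpha,L^c)={\rm Sol}_{\rm per}(\alpha,L^{\rm per})\simeq\mathbf C^{|G|}$.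
   Context: ${\rm Seq}(\mathbf C)$: complex sequences indexed by $t\in\mathbf Z_{\ge0}$ with shift $\sigma(x)^{(t)}=x^{(t+1)}$. The equation $\sigma(s)=\alpha\star s$ means $s_g^{(t+1)}=\sum_{h\in G}\alpha^{(t)}_hs^{(t)}_{h^{-1}g}$. ${\rm Sol}(\alpha,L)$ is the $\mathbf C$-space of all solutions; ${\rm Sol}_c(\alpha,L^c)$ those with $s^{(t)}$ of finite support for every $t$; ${\rm Sol}_{\rm per}(\alpha,L^{\rm per})$ those which are $H$-periodic ($s_{gh}=s_g$ for all $g\in G,h\in H$) for some normal subgroup $H$ of finite index in $G$. *)

From HB Require Import structures.
From mathcomp Require Import all_boot all_order all_algebra.
From mathcomp Require Import complex reals.
Set Implicit Arguments. Unset Strict Implicit. Unset Printing Implicit Defensive.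
Import Order.TTheory GRing.Theory Num.Theory.
Local Open Scope ring_scope.

(* Seq(C) = nat -> C ; elements of C(G, Seq(C)) are functions G -> nat -> C,
   written s g t = s_g^{(t)}.  G is a discrete group (an arbitrary, possibly
   infinite, mathcomp [groupType]). *)

Section Defs.
Variables (C : numDomainType) (G : groupType).

Definition shift (x : nat -> C) : nat -> C := fun t => x t.+1.

Definition sigma_subring_const (k : (nat -> C) -> Prop) : Prop :=
  [/\ (forall c : C, k (fun _ => c)),
      (forall x y, k x -> k y -> k (fun t => x t - y t)),
      (forall x y, k x -> k y -> k (fun t => x t * y t)),
      (forall x, k x -> k (shift x)) &
      (forall x, k x -> shift x = x -> exists c : C, x = fun _ => c)].

(* The support of alpha is contained in the finite duplicate-free list S, so
   the sum over h in G in alpha * s equals the sum over h in S. *)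
Definition Sol (alpha : G -> nat -> C) (S : seq G) (s : G -> nat -> C) : Prop :=
  forall (g : G) (t : nat),
    s g t.+1 = \sum_(h <- S) alpha h t * s (h^-1 * g)%g t.

Definition Sol_c alpha S (s : G -> nat -> C) : Prop :=
  Sol alpha S s /\
  forall t : nat, exists F : seq G, forall g, g \notin F -> s g t = 0.

Definition normal_finite_index (H : G -> Prop) : Prop :=
  [/\ H 1%g,
      (forall x y, H x -> H y -> H (x * y)%g),
      (forall x, H x -> H x^-1%g),
      (forall x g, H x -> H (g^-1 * x * g)%g) &
      exists reps : seq G, forall g, exists2 r, r \in reps & H (r^-1 * g)%g].

Definition periodic (H : G -> Prop) (s : G -> nat -> C) : Prop :=
  forall g h, H h -> s (g * h)%g = s g.

Definition Sol_per alpha S (s : G -> nat -> C) : Prop :=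
  Sol alpha S s /\ exists H, normal_finite_index H /\ periodic H s.

(* A is dense in B for the topology of pointwise convergence on
   Z_{>=0} x G (product topology), unfolded: every basic neighbourhood of a
   point of B meets A. *)
Definition dense_in (A B : (G -> nat -> C) -> Prop) : Prop :=
  forall s, B s -> forall (F : seq (nat * G)) (e : C), 0 < e ->
    exists u, A u /\ forall p, p \in F -> `|u p.2 p.1 - s p.2 p.1| < e.

End Defs.

Definition residually_finite (G : groupType) : Prop :=
  forall g : G, g != 1%g ->
    exists H : G -> Prop, normal_finite_index H /\ ~ H g.

Definition finite_group (G : groupType) : Prop :=
  exists e : seq G, forall g, g \in e.

From HB Require Import structures.
From mathcomp Require Import all_boot all_order all_algebra.
From mathcomp Require Import complex reals boolp.
From Stdlib Require Import ClassicalEpsilon.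
Set Implicit Arguments. Unset Strict Implicit. Unset Printing Implicit Defensive.
Import Order.TTheory GRing.Theory Num.Theory.
Local Open Scope ring_scope.

(* The equation s^{(t+1)} = alpha^{(t)} * s^{(t)} is a forward recursion, so a
   solution is determined by its initial row s^{(0)}, and s_g^{(t)} only depends
   on that row on a finite "cone" of points g' = w g with w a word of length t
   in S^{-1}.  A basic neighbourhood of a solution only constrains finitely many
   values, hence only the initial row on a finite set L.  (a) Truncating the
   initial row outside L gives a finitely supported solution.  (b) If G is
   residually finite, a normal subgroup H of finite index separates the points
   of L, and the H-periodic extension of the initial row from L gives a periodic
   solution; conversely, a periodic solution close, at 1 and at g, to the one
   started from the Dirac row at 1 has a period subgroup avoiding g.  (c) A periodic function with a nonzero
   value has this value on a whole coset of a finite-index subgroup, so it can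
   only have finite support if G is finite.  (d) For finite G the initial row is
   a free parameter in C^G. *)

Section Evolution.
Variables (C : numDomainType) (G : groupType) (alpha : G -> nat -> C) (S : seq G).

Fixpoint evolve (init : G -> C) (t : nat) : G -> C :=
  if t is t'.+1 then fun g => \sum_(h <- S) alpha h t' * evolve init t' (h^-1 * g)%g
  else init.

Definition sol init : G -> nat -> C := fun g t => evolve init t g.

Lemma Sol_sol init : Sol alpha S (sol init).
Proof. by []. Qed.

Lemma Sol_evolve s : Sol alpha S s -> forall t g, s g t = evolve (s^~ 0%N) t g.
Proof.
move=> hs; elim=> [|t IH] g //=.
by rewrite hs; apply: eq_bigr => h _; rewrite IH.
Qed.

Lemma SolE s : Sol alpha S s -> s = sol (s^~ 0%N).
Proof. by move=> hs; apply: funext => g; apply: funext => t; apply: Sol_evolve. Qed.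

Lemma evolve_lin a i1 i2 i3 t g : (forall x, i3 x = a * i1 x + i2 x) ->
  evolve i3 t g = a * evolve i1 t g + evolve i2 t g.
Proof.
move=> hi; elim: t g => [|t IH] g //=.
rewrite mulr_sumr -big_split /=; apply: eq_bigr => h _.
by rewrite IH mulrDr mulrCA.
Qed.

Lemma evolve_periodic init h t g : (forall x, init (x * h)%g = init x) ->
  evolve init t (g * h)%g = evolve init t g.
Proof.
move=> hi; elim: t g => [|t IH] g //=.
by apply: eq_bigr => h' _; rewrite mulgA IH.
Qed.

Lemma evolve_finite_support init :
  (exists F : seq G, forall g, g \notin F -> init g = 0) ->
  forall t, exists F : seq G, forall g, g \notin F -> evolve init t g = 0.
Proof.
move=> init_supp; elim=> [//|t [F hF]].
exists [seq (h * x)%g | h <- S, x <- F] => g hg /=.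
rewrite big1_seq // => h hS; rewrite hF ?mulr0 //.
apply: contra hg => hx; apply/allpairsP; exists (h, (h^-1 * g)%g).
by rewrite /= mulVKg.
Qed.

Fixpoint cone (t : nat) (g : G) : seq G :=
  if t is t'.+1 then flatten [seq cone t' (h^-1 * g)%g | h <- S] else [:: g].

Lemma evolve_local i1 i2 t g : {in cone t g, i1 =1 i2} -> evolve i1 t g = evolve i2 t g.
Proof.
elim: t g => [|t IH] g /= hi; first by apply: hi; rewrite inE.
apply: eq_big_seq => h hS; congr (_ * _); apply: IH => x hx; apply: hi.
by apply/flattenP; exists (cone t (h^-1 * g)%g) => //; apply: map_f.
Qed.

Definition cone_of (F : seq (nat * G)) : seq G := flatten [seq cone p.1 p.2 | p <- F].

Lemma dense_in_cone (A : (G -> nat -> C) -> Prop) :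
  (forall s, Sol alpha S s -> forall F,
     exists init, A (sol init) /\ {in cone_of F, init =1 s^~ 0%N}) ->
  dense_in A (Sol alpha S).
Proof.
move=> hA s hs F e he; have [init [Ainit hinit]] := hA s hs F.
exists (sol init); split=> // p hp.
rewrite /sol (Sol_evolve hs) (@evolve_local _ (s^~ 0%N)) ?subrr ?normr0 // => x hx.
by apply: hinit; apply/flattenP; exists (cone p.1 p.2) => //; apply: map_f.
Qed.

Lemma Sol_c_dense : dense_in (Sol_c alpha S) (Sol alpha S).
Proof.
apply: dense_in_cone => s hs F.
pose init x := if x \in cone_of F then s x 0%N else 0.
exists init; split; last by move=> x /= xF; rewrite /init xF.
split=> //; apply: evolve_finite_support.
by exists (cone_of F) => g /negbTE; rewrite /init => ->.
Qed.

End Evolution.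

Section FiniteIndexSubgroups.
Variable G : groupType.

Lemma normal_finite_indexT : normal_finite_index (fun _ : G => True).
Proof. by split=> //; exists [:: 1%g] => g; exists 1%g; rewrite ?inE. Qed.

Lemma normal_finite_indexI (H1 H2 : G -> Prop) :
  normal_finite_index H1 -> normal_finite_index H2 ->
  normal_finite_index (fun x => H1 x /\ H2 x).
Proof.
move=> [H1_1 H1M H1V H1J [reps1 hreps1]] [H2_1 H2M H2V H2J [reps2 hreps2]].
split=> [//|x y [] ? ? [] ? ?|x [] ? ?|x g [] ? ?|]; try by split; auto.
(* a representative of the coset of H1 /\ H2 inside the cosets x H1 and y H2 *)
pose rep (p : G * G) := epsilon (inhabits 1%g)
  (fun c => H1 (p.1^-1 * c)%g /\ H2 (p.2^-1 * c)%g).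
exists [seq rep (x, y) | x <- reps1, y <- reps2] => g.
have [x xr hx] := hreps1 g; have [y yr hy] := hreps2 g.
have [hc1 hc2] : H1 (x^-1 * rep (x, y))%g /\ H2 (y^-1 * rep (x, y))%g.
  by apply: (epsilon_spec (inhabits 1%g)
    (fun c => H1 (x^-1 * c)%g /\ H2 (y^-1 * c)%g)); exists g.
exists (rep (x, y)); first by apply/allpairsP; exists (x, y).
have E z : ((rep (x, y))^-1 * g = (z^-1 * rep (x, y))^-1 * (z^-1 * g))%g.
  by rewrite invgM invgK !mulgA mulgK.
by split; [rewrite (E x); apply: H1M; auto | rewrite (E y); apply: H2M; auto].
Qed.

Lemma residually_finite_avoid (D : seq G) : residually_finite G ->
  {in D, forall g, g != 1%g} ->
  exists H, normal_finite_index H /\ {in D, forall g, ~ H g}.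
Proof.
move=> rf; elim: D => [|d D IH] hD.
  by exists (fun _ => True); split=> //; apply: normal_finite_indexT.
have [H [hH hHD]] := IH (fun g gD => hD g (mem_behead (s := d :: D) gD)).
have [K [hK hKd]] := rf d (hD d (mem_head _ _)).
exists (fun x => H x /\ K x); split; first exact: normal_finite_indexI.
by move=> g; rewrite inE => /orP [/eqP -> []|/hHD gnH []].
Qed.

Lemma residually_finite_separate (L : seq G) : residually_finite G ->
  exists H, normal_finite_index H /\ {in L &, forall x y, H (x^-1 * y)%g -> x = y}.
Proof.
move=> rf.
pose D := [seq g <- [seq (x^-1 * y)%g | x <- L, y <- L] | g != 1%g].
have [|H [hH hHD]] := @residually_finite_avoid D rf.
  by move=> g; rewrite mem_filter => /andP [].
exists H; split=> // x y xL yL hxy; apply/eqP/negPn/negP => nxy.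
apply: (hHD (x^-1 * y)%g) => //; rewrite mem_filter mulg_eq1 eqg_inv nxy /=.
by apply/allpairsP; exists (x, y).
Qed.

Lemma periodic_extension (T : Type) (H : G -> Prop) (L : seq G) (f : G -> T) :
  H 1%g -> (forall x y, H x -> H y -> H (x * y)%g) -> (forall x, H x -> H x^-1%g) ->
  {in L &, forall x y, H (x^-1 * y)%g -> x = y} ->
  exists init : G -> T, {in L, init =1 f} /\ forall z h, H h -> init (z * h)%g = init z.
Proof.
move=> H1 HM HV sepL.
(* outside the H-cosets meeting L, [find] fails and [nth] returns the default 1 *)
pose init z := f (nth 1%g L (find (fun x => `[< H (x^-1 * z)%g >]) L)).
exists init; split.
  move=> z zL; have hz : has (fun x => `[< H (x^-1 * z)%g >]) L.
    by apply/hasP; exists z => //; apply/asboolP; rewrite mulVg.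
  have /asboolP := nth_find 1%g hz.
  by rewrite /init => /sepL -> //; rewrite mem_nth // -has_find.
move=> z h hh; rewrite /init; congr (f (nth _ _ _)); apply: eq_find => x.
apply/asboolP/asboolP; rewrite mulgA => hx; last exact: HM.
by rewrite -(mulgK h (x^-1 * z)%g); apply: HM => //; apply: HV.
Qed.

Lemma periodic_finite_support (C : numDomainType) (H : G -> Prop) (s : G -> nat -> C) t g :
  normal_finite_index H -> periodic H s ->
  (exists F : seq G, forall x, x \notin F -> s x t = 0) -> s g t != 0 -> finite_group G.
Proof.
move=> [_ _ _ _ [reps hreps]] hper [F hF] sg0.
have gF : g \in F by apply: contraNT sg0 => /hF ->.
exists [seq (r * g^-1 * f)%g | r <- reps, f <- F] => x.
have [r hr hx] := hreps x.
apply/allpairsP; exists (r, (g * (r^-1 * x))%g); split=> //=.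
  by apply: contraNT sg0 => /hF; rewrite hper // => ->.
by rewrite -mulgA mulKg mulVKg.
Qed.

End FiniteIndexSubgroups.

Section Solutions.
Variables (C : numDomainType) (G : groupType) (alpha : G -> nat -> C) (S : seq G).

Lemma Sol_per_dense : residually_finite G -> dense_in (Sol_per alpha S) (Sol alpha S).
Proof.
move=> rf; apply: dense_in_cone => s hs F.
have [H [hH sepL]] := residually_finite_separate (cone_of S F) rf.
have [H1 HM HV _ _] := hH.
have [init [hinit hper]] := periodic_extension (s^~ 0%N) H1 HM HV sepL.
exists init; split=> //; split=> //; exists H; split=> // g h hh.
by apply: funext => t; apply: evolve_periodic => x; apply: hper.
Qed.

Lemma Sol_c_per_eq0 s : ~ finite_group G ->
  Sol_c alpha S s -> Sol_per alpha S s -> s = (fun _ _ => 0).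
Proof.
move=> nfin [_ supp] [_ [H [hH hper]]].
apply: funext => g; apply: funext => t; case: (eqVneq (s g t) 0) => // sg0.
by case: nfin; apply: periodic_finite_support hH hper (supp t) sg0.
Qed.

Lemma Sol_c_finite s : finite_group G -> Sol alpha S s -> Sol_c alpha S s.
Proof. by move=> [e he] hs; split=> // t; exists e => g; rewrite he. Qed.

Lemma Sol_per_finite s : finite_group G -> Sol alpha S s -> Sol_per alpha S s.
Proof.
move=> [e he] hs; split=> //; exists (fun x => x = 1%g); split; last first.
  by move=> g h ->; rewrite mulg1.
split=> [//|x y -> ->|x ->|x g ->|]; rewrite ?mulg1 ?invg1 ?mulVg //.
by exists e => g; exists g; rewrite ?he ?mulVg.
Qed.

Lemma Sol_row_parametrization (e : seq G) : uniq e -> (forall g, g \in e) ->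
  exists f : 'rV[C]_(size e) -> (G -> nat -> C),
    [/\ (forall a x y g t, f (a *: x + y) g t = a * f x g t + f y g t),
        injective f &
        (forall s, Sol alpha S s <-> exists v, s = f v)].
Proof.
move=> e_uniq he.
have idx_lt g : (index g e < size e)%N by rewrite index_mem he.
pose idx g := Ordinal (idx_lt g).
exists (fun v => sol alpha S (fun g => v 0 (idx g))); split.
- by move=> a x y g t; apply: evolve_lin => z; rewrite !mxE.
- move=> x y hxy; apply/matrixP => i j; rewrite (ord1 i).
  have idx_nth : idx (nth 1%g e j) = j by apply: val_inj; rewrite /= index_uniq.
  by have := congr1 (fun s => s (nth 1%g e j) 0%N) hxy; rewrite /sol /= idx_nth.
- move=> s; split=> [hs|[v ->]]; last exact: Sol_sol.
  exists (\row_j s (nth 1%g e j) 0%N); rewrite {1}(SolE hs); congr sol.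
  by apply: funext => g; rewrite mxE /= nth_index.
Qed.

End Solutions.

Lemma residually_finite_of_dense_per (C : numFieldType) (G : groupType)
    (alpha : G -> nat -> C) (S : seq G) :
  dense_in (Sol_per alpha S) (Sol alpha S) -> residually_finite G.
Proof.
move=> dense g g1.
pose dirac1 (x : G) : C := if x == 1%g then 1 else 0.
have half_gt0 : (0 : C) < 2^-1 by rewrite invr_gt0 ltr0n.
have [u [[_ [H [hH hper]]] close]] :=
  dense (sol alpha S dirac1) (Sol_sol _ _ _) [:: (0%N, 1%g); (0%N, g)] _ half_gt0.
exists H; split=> // Hg.
have close1 := close (0%N, 1%g) (mem_head _ _).
have closeg := close (0%N, g) (mem_last (0%N, 1%g) [:: (0%N, g)]).
have ug : u g = u 1%g by rewrite -{1}(mul1g g) hper.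
move: close1 closeg; rewrite /= /sol /= /dirac1 eqxx (negbTE g1) subr0 ug => close1 closeg.
have : `|(1 : C)| < 2^-1 + 2^-1.
  rewrite -{1}(subrK (u 1%g 0%N) 1); apply: le_lt_trans (ler_normD _ _) _.
  by rewrite -normrN opprB; apply: ltrD.
by rewrite normr1 -mulr2n -[_ *+ 2]mulr_natr mulVf ?ltxx // pnatr_eq0.
Qed.

Theorem proposition1p13 (R : realType) (G : groupType)
  (k : (nat -> R[i]) -> Prop) (hk : sigma_subring_const k)
  (alpha : G -> nat -> R[i]) (S : seq G)
  (hS : uniq S) (halpha_supp : forall h, h \notin S -> alpha h = (fun _ => 0))
  (halpha_k : forall h, k (alpha h)) :
  [/\ dense_in (Sol_c alpha S) (Sol alpha S),
      (dense_in (Sol_per alpha S) (Sol alpha S) <-> residually_finite G),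
      (~ finite_group G ->
         forall s, Sol_c alpha S s -> Sol_per alpha S s -> s = (fun _ _ => 0)) &
      (forall e : seq G, uniq e -> (forall g, g \in e) ->
         (forall s, (Sol alpha S s <-> Sol_c alpha S s) /\
                    (Sol alpha S s <-> Sol_per alpha S s)) /\
         exists f : 'rV[R[i]]_(size e) -> (G -> nat -> R[i]),
           [/\ (forall a x y g t, f (a *: x + y) g t = a * f x g t + f y g t),
               injective f &
               (forall s, Sol alpha S s <-> exists v, s = f v)])].
Proof.
split.
- exact: Sol_c_dense.
- split; [exact: residually_finite_of_dense_per | exact: Sol_per_dense].
- by move=> nfin s; apply: Sol_c_per_eq0.
- move=> e e_uniq he; have fin : finite_group G by exists e.
  split; last exact: Sol_row_parametrization.
  move=> s; split; split=> [|[]//].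
    exact: Sol_c_finite.
  exact: Sol_per_finite.
Qed.
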